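(* Let $P\in\mathbb{R}^{p\times m}$, $Y_d\in\mathbb{R}^p$, plant $Y_k=PU_k+N_k$, $E_k=Y_d-Y_k$, $\bar U_k=-\Delta U_k$, $D_k=-\Delta N_k$ (so $E_{k+1}=E_k+P\bar U_k+D_k$), $\bar B=\begin{bmatrix}P\\0\end{bmatrix}$, $\bar L\in\mathbb{R}^{2p\times p}$, and the ESO $\hat{\bar X}_{k+1}=(\bar A-\bar L\bar C)\hat{\bar X}_k+\bar B\bar U_k+\bar LE_k$, $\hat{\bar X}_k=\begin{bmatrix}\hat E_k\\\hat D_k\end{bmatrix}$, so $\hat D_k=F\hat{\bar X}_k$. Let $K,H\in\mathbb{R}^{m\times p}$ and apply $\bar U_k=-KE_k-H\hat D_k$. Then $\begin{bmatrix}E_{k+1}\\\hat{\bar X}_{k+1}\end{bmatrix}=G\begin{bmatrix}E_{k}\\\hat{\bar X}_{k}\end{bmatrix}+\begin{bmatrix}I\\0\end{bmatrix}D_k$ with $G=\begin{bmatrix}I-PK&-PHF\\\bar L-\bar BK&\bar A-\bar L\bar C-\bar BHF\end{bmatrix}$, and with $T=\begin{bmatrix}I&0\\-\bar C^{\top}&I\end{bmatrix}$ one has $TGT^{-1}=\begin{bmatrix}I-PK&-PHF\\0&\bar A-\bar L\bar C\end{bmatrix}$. Hence the eigenvalues of $G$ are those of $I-PK$ together with those of $\bar A-\bar L\bar C$ (separation principle), and the gains $K$, $H$, $\bar L$ can be synthesized separately from each other.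
   Context: $\mathbb{Z}_+=\{0,1,2,\dots\}$; $\Delta f_k=f_{k+1}-f_k$. $U_k\in\mathbb{R}^m$ input, $Y_k\in\mathbb{R}^p$ output, $(N_k)\subset\mathbb{R}^p$ bounded uncertainty. $\bar A=\begin{bmatrix}I_p&I_p\\0&I_p\end{bmatrix}$, $\bar C=\begin{bmatrix}I_p&0\end{bmatrix}$, $F=\begin{bmatrix}0&I_p\end{bmatrix}$. *)

From HB Require Import structures.
From mathcomp Require Import all_boot all_order all_algebra.
Set Implicit Arguments. Unset Strict Implicit. Unset Printing Implicit Defensive.
Import Order.TTheory GRing.Theory Num.Theory.
Local Open Scope ring_scope.

(* Block index convention: R^{2p} is 'cV_(p + p). *)
Definition Abar {R : ringType} (p : nat) : 'M[R]_(p + p) :=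
  block_mx 1%:M 1%:M 0 1%:M.
Definition Cbar {R : ringType} (p : nat) : 'M[R]_(p, p + p) := row_mx 1%:M 0.
Definition Fsel {R : ringType} (p : nat) : 'M[R]_(p, p + p) := row_mx 0 1%:M.
Definition Bbar {R : ringType} (p m : nat) (P : 'M[R]_(p, m)) : 'M[R]_(p + p, m) :=
  col_mx P 0.

Definition fdiff {V : zmodType} (f : nat -> V) (k : nat) : V := f k.+1 - f k.

Definition Gcl {R : ringType} (p m : nat) (P : 'M[R]_(p, m)) (K H : 'M[R]_(m, p))
  (Lbar : 'M[R]_(p + p, p)) : 'M[R]_(p + (p + p)) :=
  block_mx (1%:M - P *m K) (- (P *m H *m Fsel p))
           (Lbar - Bbar P *m K) (Abar p - Lbar *m Cbar p - Bbar P *m H *m Fsel p).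

Definition Tsim {R : ringType} (p : nat) : 'M[R]_(p + (p + p)) :=
  block_mx 1%:M 0 (- (Cbar p)^T) 1%:M.

From HB Require Import structures.
From mathcomp Require Import all_boot all_order all_algebra.
Set Implicit Arguments. Unset Strict Implicit. Unset Printing Implicit Defensive.
Import Order.TTheory GRing.Theory Num.Theory.
Local Open Scope ring_scope.

(* The similarity T sends (E, Xhat) to (E, Xhat - Cbar^T E), i.e. to the
   tracking error and the observer's estimation error.  Because
   Cbar^T P = Bbar and F Cbar^T = 0, the input drops out of the dynamics of the
   estimation error, so T G T^-1 is block upper triangular with diagonal blocks
   I - P K and Abar - Lbar Cbar, and the characteristic polynomial factors. *)

Section LowerUnitriangular.
Variables (R : pzRingType) (n1 n2 : nat) (X : 'M[R]_(n2, n1)).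

Lemma mul_lblock1N : block_mx 1%:M 0 (- X) 1%:M *m block_mx 1%:M 0 X 1%:M = 1%:M.
Proof.
by rewrite mulmx_block !mulmx1 !mul1mx !mulmx0 !mul0mx !addr0 add0r addNr -scalar_mx_block.
Qed.

Lemma conj_lblock1 (A : 'M_n1) (B : 'M_(n1, n2)) (C : 'M_(n2, n1)) (D : 'M_n2) :
  block_mx 1%:M 0 (- X) 1%:M *m block_mx A B C D *m block_mx 1%:M 0 X 1%:M
  = block_mx (A + B *m X) B (C - X *m A + (D - X *m B) *m X) (D - X *m B).
Proof.
rewrite !mulmx_block !mul1mx !mul0mx !mulmx1 !mulmx0 !addr0 !add0r !mulNmx.
by rewrite ![- _ + _]addrC.
Qed.

End LowerUnitriangular.

Lemma char_poly_ublock (R : comNzRingType) n1 n2 (A : 'M[R]_n1) B (D : 'M[R]_n2) :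
  char_poly (block_mx A B 0 D) = char_poly A * char_poly D.
Proof.
rewrite /char_poly /char_poly_mx map_block_mx /= map_mx0.
by rewrite scalar_mx_block opp_block_mx add_block_mx subr0 add0r det_ublock.
Qed.

Lemma char_poly_conj (R : comUnitRingType) n (S A : 'M[R]_n) :
  S \in unitmx -> char_poly (S *m A *m invmx S) = char_poly A.
Proof.
move=> S_unit; rewrite /char_poly.
set S' := map_mx polyC S; set Si' := map_mx polyC (invmx S).
have S'Si' : S' *m Si' = 1%:M by rewrite -map_mxM mulmxV ?map_mx1.
have -> : char_poly_mx (S *m A *m invmx S) = S' *m char_poly_mx A *m Si'.
  rewrite /char_poly_mx mulmxBr mulmxBl !map_mxM.
  by congr (_ - _); rewrite scalar_mxC -mulmxA S'Si' mulmx1.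
by rewrite !det_mulmx mulrAC -det_mulmx S'Si' det1 mul1r.
Qed.

Section ObserverMatrices.
Variables (R : nzRingType) (p : nat).

Lemma trCbar : (Cbar (R := R) p)^T = col_mx 1%:M 0.
Proof. by rewrite /Cbar tr_row_mx trmx1 trmx0. Qed.

Lemma Fsel_trCbar : Fsel (R := R) p *m (Cbar p)^T = 0.
Proof. by rewrite trCbar /Fsel mul_row_col mul0mx mulmx0 addr0. Qed.

Lemma Cbar_trCbar : Cbar (R := R) p *m (Cbar p)^T = 1%:M.
Proof. by rewrite trCbar /Cbar mul_row_col mulmx1 mulmx0 addr0. Qed.

Lemma Abar_trCbar : Abar (R := R) p *m (Cbar p)^T = (Cbar p)^T.
Proof. by rewrite trCbar /Abar mul_block_col !mulmx1 !mulmx0 addr0 add0r. Qed.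

Lemma trCbar_mul m (P : 'M[R]_(p, m)) : (Cbar p)^T *m P = Bbar P.
Proof. by rewrite trCbar /Bbar mul_col_mx mul1mx mul0mx. Qed.

End ObserverMatrices.

Lemma Tsim_mul_inv (R : nzRingType) p :
  Tsim (R := R) p *m block_mx 1%:M 0 (Cbar p)^T 1%:M = 1%:M.
Proof. exact: mul_lblock1N. Qed.

Lemma Tsim_unit (R : comUnitRingType) p : Tsim (R := R) p \in unitmx.
Proof. by case: (mulmx1_unit (Tsim_mul_inv R p)). Qed.

Lemma invmx_Tsim (R : comUnitRingType) p :
  invmx (Tsim (R := R) p) = block_mx 1%:M 0 (Cbar p)^T 1%:M.
Proof.
by rewrite -[invmx _]mulmx1 -(Tsim_mul_inv R p) mulmxA mulVmx ?Tsim_unit ?mul1mx.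
Qed.

Lemma Tsim_Gcl_conj (R : comUnitRingType) p m (P : 'M[R]_(p, m)) K H Lbar :
  Tsim p *m Gcl P K H Lbar *m invmx (Tsim p)
  = block_mx (1%:M - P *m K) (- (P *m H *m Fsel p)) 0 (Abar p - Lbar *m Cbar p).
Proof.
have observer_block : Abar p - Lbar *m Cbar p - Bbar P *m H *m Fsel p
    - (Cbar p)^T *m - (P *m H *m Fsel p) = Abar p - Lbar *m Cbar p.
  by rewrite mulmxN opprK !mulmxA trCbar_mul subrK.
have coupling_trCbar : P *m H *m Fsel p *m (Cbar p)^T = 0.
  by rewrite -mulmxA Fsel_trCbar mulmx0.
rewrite invmx_Tsim conj_lblock1 observer_block mulNmx coupling_trCbar oppr0 addr0.
rewrite mulmxBr mulmx1 mulmxA trCbar_mul mulmxBl Abar_trCbar.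
by rewrite -[Lbar *m _ *m _]mulmxA Cbar_trCbar mulmx1 opprB subrKA subrKA subrr.
Qed.

Section ClosedLoop.
Variables (R : nzRingType) (p m : nat) (P : 'M[R]_(p, m)) (Yd : 'cV[R]_p).
Variables (U : nat -> 'cV[R]_m) (N Y E : nat -> 'cV[R]_p).
Variables (Lbar : 'M[R]_(p + p, p)) (Xhat : nat -> 'cV[R]_(p + p)) (K H : 'M[R]_(m, p)).
Hypothesis plant : forall k, Y k = P *m U k + N k.
Hypothesis error_def : forall k, E k = Yd - Y k.
Hypothesis observer : forall k, Xhat k.+1 = (Abar p - Lbar *m Cbar p) *m Xhat k
                                  + Bbar P *m (- fdiff U k) + Lbar *m E k.
Hypothesis control : forall k, - fdiff U k = - (K *m E k) - H *m (Fsel p *m Xhat k).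

Lemma tracking_error_step k : E k.+1 = E k + P *m (- fdiff U k) - fdiff N k.
Proof.
rewrite !error_def !plant /fdiff mulmxN mulmxBr -!addrA -!opprD.
by rewrite [in RHS]addrACA !subrKC.
Qed.

Lemma closed_loop_step k :
  col_mx (E k.+1) (Xhat k.+1)
  = Gcl P K H Lbar *m col_mx (E k) (Xhat k) + col_mx (- fdiff N k) 0.
Proof.
rewrite /Gcl mul_block_col add_col_mx addr0; congr col_mx.
  rewrite tracking_error_step control mulmxBr mulmxN !mulmxA mulmxBl mul1mx mulNmx.
  by rewrite addrA.
rewrite observer control mulmxBr mulmxN !mulmxA !mulmxBl.
by rewrite addrC addrA addrACA.
Qed.

End ClosedLoop.

Theorem lemma5 (R : realFieldType) (p m : nat)
  (P : 'M[R]_(p, m)) (Yd : 'cV[R]_p)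
  (U : nat -> 'cV[R]_m) (N Y E : nat -> 'cV[R]_p)
  (Lbar : 'M[R]_(p + p, p)) (Xhat : nat -> 'cV[R]_(p + p))
  (K H : 'M[R]_(m, p)) :
  (* bounded uncertainty *)
  (exists M : R, forall k i, `|N k i 0| <= M) ->
  (* plant and tracking error *)
  (forall k, Y k = P *m U k + N k) ->
  (forall k, E k = Yd - Y k) ->
  (* ESO, with Ubar_k = - Delta U_k *)
  (forall k, Xhat k.+1 = (Abar p - Lbar *m Cbar p) *m Xhat k
                         + Bbar P *m (- fdiff U k) + Lbar *m E k) ->
  (* control law Ubar_k = -K E_k - H Dhat_k, Dhat_k = F Xhat_k *)
  (forall k, - fdiff U k = - (K *m E k) - H *m (Fsel p *m Xhat k)) ->
  (forall k, col_mx (E k.+1) (Xhat k.+1)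
             = Gcl P K H Lbar *m col_mx (E k) (Xhat k)
               + col_mx (- fdiff N k) (0 : 'cV[R]_(p + p)))
  /\ Tsim (R := R) p \in unitmx
  /\ Tsim (R := R) p *m Gcl P K H Lbar *m invmx (Tsim (R := R) p)
     = block_mx (1%:M - P *m K) (- (P *m H *m Fsel p))
                0 (Abar p - Lbar *m Cbar p)
  /\ char_poly (Gcl P K H Lbar)
     = char_poly (1%:M - P *m K) * char_poly (Abar p - Lbar *m Cbar p).
Proof.
(* Boundedness of N matters only for stability, not for these identities. *)
move=> _ plant error_def observer control.
split; first exact: closed_loop_step plant error_def observer control.
split; first exact: Tsim_unit.
split; first exact: Tsim_Gcl_conj.
rewrite -(char_poly_conj (Gcl P K H Lbar) (Tsim_unit R p)) Tsim_Gcl_conj.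
exact: char_poly_ublock.
Qed.
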